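(* For every integer $n\geq 3$, $$\gamma_t(C_n\times C_3)=\left\lceil \frac{4n}{5}\right\rceil$$ and $$\gamma_p(C_n\times C_3)=\begin{cases}\left\lceil\frac{4n}{5}\right\rceil, & \text{if } n\equiv 0,2,4 \pmod 5,\\[2pt] \left\lceil\frac{4n}{5}\right\rceil+1, & \text{if } n\equiv 1,3 \pmod 5.\end{cases}$$
   Context: All graphs are finite, simple and undirected. $C_n$ denotes the cycle of order $n$ and $G\times H$ the Cartesian product of graphs. For a graph $G$ without isolated vertices: a set $D\subseteq V(G)$ is a total dominating set if every vertex of $G$ (including those in $D$) has a neighbour in $D$; $\gamma_t(G)$ is the minimum size of a total dominating set. A set $D\subseteq V(G)$ is a paired dominating set if every vertex outside $D$ has a neighbour in $D$ and the induced subgraph $G[D]$ has a perfect matching; $\gamma_p(G)$ is the minimum size of a paired dominating set. *)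

From mathcomp Require Import all_boot.
Set Implicit Arguments. Unset Strict Implicit. Unset Printing Implicit Defensive.

Definition cycle_adj (n : nat) : rel 'I_n :=
  fun i j => (j == (i.+1 %% n) :> nat) || (i == (j.+1 %% n) :> nat).

Definition cart_adj (T U : finType) (e : rel T) (f : rel U) : rel (T * U) :=
  fun x y => ((x.1 == y.1) && f x.2 y.2) || ((x.2 == y.2) && e x.1 y.1).

Definition total_dominating (T : finType) (e : rel T) (D : {set T}) : Prop :=
  forall v : T, exists2 u, u \in D & e v u.

Definition dominating (T : finType) (e : rel T) (D : {set T}) : Prop :=
  forall v : T, v \notin D -> exists2 u, u \in D & e v u.

Definition has_perfect_matching (T : finType) (e : rel T) (D : {set T}) : Prop :=
  exists m : T -> T, forall x, x \in D ->
    [/\ m x \in D, m x != x, m (m x) = x & e x (m x)].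

Definition paired_dominating (T : finType) (e : rel T) (D : {set T}) : Prop :=
  dominating e D /\ has_perfect_matching e D.

Definition is_min_size (T : finType) (P : {set T} -> Prop) (k : nat) : Prop :=
  (exists2 D : {set T}, P D & #|D| = k) /\ (forall D : {set T}, P D -> k <= #|D|).

Definition gamma_t_is (T : finType) (e : rel T) (k : nat) : Prop :=
  is_min_size (total_dominating e) k.

Definition gamma_p_is (T : finType) (e : rel T) (k : nat) : Prop :=
  is_min_size (paired_dominating e) k.

Definition CnC3 (n : nat) : rel ('I_n * 'I_3) := cart_adj (@cycle_adj n) (@cycle_adj 3).

Definition ceil_div (a b : nat) : nat := (a + b.-1) %/ b.
Arguments CnC3 n : clear implicits.

From mathcomp Require Import all_boot zify.
Set Implicit Arguments. Unset Strict Implicit. Unset Printing Implicit Defensive.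

(* Lower bound: let d_i be the number of vertices of a total dominating set D in
   column i of C_n x C_3.  An empty column forces d_(i-1) + d_(i+1) >= 3 and a
   singleton column forces d_(i-1) + d_(i+1) >= 1; a weighted sum of these local
   constraints gives 5 |D| >= 4 n.  A paired dominating set is total dominating and
   has even size, which adds one when ceil(4n/5) is odd, i.e. when n = 1, 3 mod 5.
   Upper bound: explicit sets, periodic with period 5 (four vertices per five
   columns) plus a tail depending on n mod 5.  Such a set is described column by
   column, and its domination and matching conditions only involve three
   consecutive columns, so they are checked by computation on the finite digraph
   of column types. *)

Lemma ord_gt0 n (i : 'I_n) : 0 < n.
Proof. exact: leq_ltn_trans (leq0n i) (ltn_ord i). Qed.

Definition cyc_succ n (i : 'I_n) : 'I_n := Ordinal (ltn_pmod i.+1 (ord_gt0 i)).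
Definition cyc_pred n (i : 'I_n) : 'I_n := Ordinal (ltn_pmod (i + n.-1) (ord_gt0 i)).

Lemma cyc_succK n : cancel (@cyc_succ n) (@cyc_pred n).
Proof.
move=> i; apply: val_inj => /=; have n_gt0 := ord_gt0 i.
by rewrite modnDml addSn -addnS prednK // modnDr modn_small.
Qed.

Lemma cyc_predK n : cancel (@cyc_pred n) (@cyc_succ n).
Proof.
move=> i; apply: val_inj => /=; have n_gt0 := ord_gt0 i.
by rewrite -addn1 modnDml -addnA addn1 prednK // modnDr modn_small.
Qed.

Lemma cycle_adj_succ n (i : 'I_n) : cycle_adj i (cyc_succ i).
Proof. by rewrite /cycle_adj /= eqxx. Qed.

Lemma cycle_adj_pred n (i : 'I_n) : cycle_adj i (cyc_pred i).
Proof. by apply/orP; right; have /(congr1 val) /= -> := cyc_predK i. Qed.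

Lemma cycle_adjP n (i k : 'I_n) : cycle_adj i k -> k = cyc_succ i \/ k = cyc_pred i.
Proof.
case/orP=> /eqP ik; [left; exact: val_inj | right].
by rewrite -(cyc_succK k); congr cyc_pred; apply: val_inj.
Qed.

Lemma cyc_succ_neq n (i : 'I_n) : 1 < n -> cyc_succ i != i.
Proof.
move=> n_gt1; rewrite -val_eqE /=; have := ltn_ord i.
case: (ltngtP i.+1 n) => [i1_lt | i1_gt | i1_eq] i_lt; last by rewrite i1_eq modnn; lia.
  by rewrite modn_small //; lia.
by lia.
Qed.

Lemma cyc_pred_neq n (i : 'I_n) : 1 < n -> cyc_pred i != i.
Proof.
move=> n_gt1; apply: contraNneq (cyc_succ_neq (cyc_pred i) n_gt1) => pred_i.
by rewrite cyc_predK pred_i.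
Qed.

Lemma cycle_adj3 (j k : 'I_3) : cycle_adj j k = (j != k).
Proof. by case: j => [[|[|[|?]]] ?]; case: k => [[|[|[|?]]] ?]. Qed.

Lemma sum_cyc_succ n (F : 'I_n -> nat) : \sum_(i < n) F (cyc_succ i) = \sum_(i < n) F i.
Proof. by rewrite [RHS](reindex_inj (can_inj (@cyc_succK n))). Qed.

Lemma sum_cyc_pred n (F : 'I_n -> nat) : \sum_(i < n) F (cyc_pred i) = \sum_(i < n) F i.
Proof. by rewrite [RHS](reindex_inj (can_inj (@cyc_predK n))). Qed.

Definition column n (D : {set 'I_n * 'I_3}) (i : 'I_n) : {set 'I_3} := [set j | (i, j) \in D].

Lemma card_columns n (D : {set 'I_n * 'I_3}) : #|D| = \sum_(i < n) #|column D i|.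
Proof.
rewrite -sum1_card (eq_bigr (fun i => \sum_(j | (i, j) \in D) 1)); last first.
  by move=> i _; rewrite -sum1_card; apply: eq_bigl => j; rewrite inE.
by rewrite pair_big_dep /=; apply: eq_bigl => -[].
Qed.

Lemma total_dominating_column n (D : {set 'I_n * 'I_3}) :
  total_dominating (CnC3 n) D -> forall (i : 'I_n) (j : 'I_3),
  [\/ exists2 j', j' \in column D i & j' != j,
      j \in column D (cyc_pred i) | j \in column D (cyc_succ i)].
Proof.
move=> tdD i j; case: (tdD (i, j)) => -[i' j'] D_ij'.
rewrite /CnC3 /cart_adj /= => /orP [/andP [/eqP ei adj_j] | /andP [/eqP ej adj_i]]; subst.
  by apply: Or31; exists j'; rewrite ?inE // eq_sym -cycle_adj3.
by case: (cycle_adjP adj_i) => ?; subst; [apply: Or33 | apply: Or32]; rewrite inE.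
Qed.

(* An empty column has its three rows dominated from the neighbouring columns;
   the vertex of a singleton column needs a neighbour in D outside its column. *)
Definition td_profile n (d : 'I_n -> nat) :=
  forall i, (d i = 0 -> 3 <= d (cyc_pred i) + d (cyc_succ i))
         /\ (d i = 1 -> 1 <= d (cyc_pred i) + d (cyc_succ i)).

Lemma td_profile_columns n (D : {set 'I_n * 'I_3}) :
  total_dominating (CnC3 n) D -> td_profile (fun i => #|column D i|).
Proof.
move=> tdD i; split.
- move/cards0_eq => col_i0.
  have cover : [set: 'I_3] \subset column D (cyc_pred i) :|: column D (cyc_succ i).
    apply/subsetP => j _; rewrite inE.
    by case: (total_dominating_column tdD i j) => [[j']|->|->]; rewrite ?orbT // col_i0 inE.
  have := subset_leq_card cover; rewrite cardsT card_ord => /leq_trans; apply.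
  by rewrite cardsU leq_subr.
- move/eqP/cards1P => [j0 col_i1].
  case: (total_dominating_column tdD i j0) => [[j']|in_pred|in_succ].
  + by rewrite col_i1 inE => /eqP ->; rewrite eqxx.
  + have : 0 < #|column D (cyc_pred i)| by apply/card_gt0P; exists j0.
    lia.
  + have : 0 < #|column D (cyc_succ i)| by apply/card_gt0P; exists j0.
    lia.
Qed.

(* Weighting the profile constraints at columns i-2, ..., i+2 shows that the
   window i-3, ..., i+3 with weights 1,2,3,3,3,2,1 carries at least 12; summing
   over i, every d_i is counted with total weight 15. *)
Lemma td_profile_sum n (d : 'I_n -> nat) : td_profile d -> 4 * n <= 5 * \sum_(i < n) d i.
Proof.
move=> prof; pose s := @cyc_succ n; pose p := @cyc_pred n.
have window i : 12 <= d (p (p (p i))) + 2 * d (p (p i)) + 3 * d (p i) + 3 * d i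
                     + 3 * d (s i) + 2 * d (s (s i)) + d (s (s (s i))).
  have [a0 a1] := prof (p (p i)); have [b0 b1] := prof (p i); have [c0 c1] := prof i.
  have [e0 e1] := prof (s i); have [f0 f1] := prof (s (s i)).
  rewrite /p /s ?cyc_predK ?cyc_succK in a0 a1 b0 b1 c0 c1 e0 e1 f0 f1 *; lia.
have := leq_sum (index_enum 'I_n) (fun i (_ : true) => window i).
rewrite sum_nat_const card_ord !big_split /= !big1_eq.
rewrite !(sum_cyc_pred (fun i => d (p (p i)))) !(sum_cyc_pred (fun i => d (p i))).
rewrite !(sum_cyc_succ (fun i => d (s (s i)))) !(sum_cyc_succ (fun i => d (s i))).
rewrite sum_cyc_pred sum_cyc_succ; set X := \sum_(i < n) d i; lia.
Qed.

Lemma total_dominating_CnC3_card n (D : {set 'I_n * 'I_3}) :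
  total_dominating (CnC3 n) D -> ceil_div (4 * n) 5 <= #|D|.
Proof.
move=> tdD; have := td_profile_sum (td_profile_columns tdD).
by rewrite card_columns /ceil_div; lia.
Qed.

Lemma perfect_matching_card_even (T : finType) (e : rel T) (D : {set T}) :
  has_perfect_matching e D -> ~~ odd #|D|.
Proof.
case=> m; move: {2}#|D|.+1 (ltnSn #|D|) => N; elim: N D => // N IH D lt_DN m_D.
case: (set_0Vmem D) => [-> | [x xD]]; first by rewrite cards0.
have [mxD mx_neq mmx _] := m_D x xD.
pose D' := D :\ x :\ m x.
have card_D : #|D| = #|D'|.+2.
  by rewrite (cardsD1 x D) xD (cardsD1 (m x) (D :\ x)) !inE mx_neq mxD.
rewrite card_D /= negbK; apply: IH; first by move: lt_DN; rewrite card_D; lia.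
move=> y; rewrite !inE => /and3P [y_mx y_x yD].
have [myD my_neq mmy e_y] := m_D y yD.
split => //; rewrite myD andbT; apply/andP; split.
- by apply: contra y_x => /eqP my_x; rewrite -mmy my_x mmx.
- by apply: contra y_mx => /eqP my_mx; rewrite -mmy my_mx.
Qed.

Lemma paired_dominating_total (T : finType) (e : rel T) (D : {set T}) :
  paired_dominating e D -> total_dominating e D.
Proof.
case=> domD [m m_D] v; case: (boolP (v \in D)) => vD; last exact: domD.
by have [? _ _ ?] := m_D v vD; exists (m v).
Qed.

(* In a constructed set each vertex is absent, or present and matched to the same
   row of the previous column, of the next column, or to another row of its own
   column. *)
Inductive role := Out | Prev | Next | Vert.

Definition present (r : role) : bool := if r is Out then false else true.
Definition mates_prev (r : role) : bool := if r is Prev then true else false.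
Definition mates_next (r : role) : bool := if r is Next then true else false.
Definition mates_column (r : role) : bool := if r is Vert then true else false.

Definition column_code := (role * role * role)%type.

Definition roles (c : column_code) : seq role := [:: c.1.1; c.1.2; c.2].
Definition row_role (c : column_code) (k : nat) : role := nth Out (roles c) k.
Definition code_weight (c : column_code) : nat := count present (roles c).

Definition code_set n (g : 'I_n -> column_code) : {set 'I_n * 'I_3} :=
  [set v : 'I_n * 'I_3 | present (row_role (g v.1) v.2)].

Lemma card_code_set n (g : 'I_n -> column_code) :
  #|code_set g| = \sum_(i < n) code_weight (g i).
Proof.
rewrite card_columns; apply: eq_bigr => i _.
rewrite -sum1_card big_mkcond /= !big_ord_recl big_ord0 !inE /code_weight.
by case: (g i) => -[[] []] [].
Qed.

Definition rows : seq nat := iota 0 3.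

Lemma mem_rows (j : 'I_3) : (j : nat) \in rows.
Proof. by rewrite mem_iota ltn_ord. Qed.

Definition column_td (a b c : column_code) : bool :=
  all (fun k => [|| has (fun k' => (k' != k) && present (row_role b k')) rows,
                    present (row_role a k) | present (row_role c k)]) rows.

Lemma code_set_td n (g : 'I_n -> column_code) :
  (forall i, column_td (g (cyc_pred i)) (g i) (g (cyc_succ i))) ->
  total_dominating (CnC3 n) (code_set g).
Proof.
move=> g_td [i j]; have /allP/(_ j (mem_rows j)) := g_td i.
case/or3P => [/hasP [k k_row /andP [k_neq b_k]] | a_j | c_j].
- have k_lt : k < 3 by rewrite mem_iota in k_row.
  exists (i, Ordinal k_lt); first by rewrite inE.
  by rewrite /CnC3 /cart_adj /= eqxx cycle_adj3 -val_eqE /= eq_sym k_neq.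
- exists (cyc_pred i, j); first by rewrite inE.
  by rewrite /CnC3 /cart_adj /= eqxx cycle_adj_pred orbT.
- exists (cyc_succ i, j); first by rewrite inE.
  by rewrite /CnC3 /cart_adj /= eqxx cycle_adj_succ orbT.
Qed.

Definition column_pm (b c : column_code) : bool :=
  all (fun k => mates_next (row_role b k) == mates_prev (row_role c k)) rows
  && (count mates_column (roles b) \in [:: 0; 2]).

Definition partner_row (c : column_code) (k : nat) : nat :=
  match k with
  | 0 => if mates_column (row_role c 1) then 1 else 2
  | 1 => if mates_column (row_role c 0) then 0 else 2
  | _ => if mates_column (row_role c 0) then 0 else 1
  end.

Lemma partner_row_lt c k : partner_row c k < 3.
Proof. by case: k => [|[|k]] /=; case: ifP. Qed.

Lemma partner_rowP (c : column_code) (j : 'I_3) :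
  count mates_column (roles c) \in [:: 0; 2] -> mates_column (row_role c j) ->
  [/\ partner_row c j != j, mates_column (row_role c (partner_row c j))
    & partner_row c (partner_row c j) = j].
Proof. by case: c => -[[] []] []; case: j => [[|[|[|?]]] ?]. Qed.

Definition mate n (g : 'I_n -> column_code) (v : 'I_n * 'I_3) : 'I_n * 'I_3 :=
  match row_role (g v.1) v.2 with
  | Prev => (cyc_pred v.1, v.2)
  | Next => (cyc_succ v.1, v.2)
  | _ => (v.1, Ordinal (partner_row_lt (g v.1) v.2))
  end.

Lemma code_set_pm n (g : 'I_n -> column_code) : 1 < n ->
  (forall i, column_pm (g i) (g (cyc_succ i))) -> has_perfect_matching (CnC3 n) (code_set g).
Proof.
move=> n_gt1 g_pm; exists (mate g) => -[i j]; rewrite inE /mate /= => ij_in.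
have /andP [/allP/(_ j (mem_rows j)) next_i col_i] := g_pm i.
have /andP [/allP/(_ j (mem_rows j)) next_pi _] := g_pm (cyc_pred i).
rewrite cyc_predK in next_pi.
case role_ij: (row_role (g i) j) ij_in next_i next_pi => // _ next_i next_pi.
- move: next_pi; case role_pij: (row_role (g (cyc_pred i)) j) => // _.
  rewrite !inE /= role_pij /= cyc_predK xpair_eqE (negbTE (cyc_pred_neq i n_gt1)).
  by rewrite /CnC3 /cart_adj /= eqxx cycle_adj_pred orbT.
- move: next_i; case role_sij: (row_role (g (cyc_succ i)) j) => // _.
  rewrite !inE /= role_sij /= cyc_succK xpair_eqE (negbTE (cyc_succ_neq i n_gt1)).
  by rewrite /CnC3 /cart_adj /= eqxx cycle_adj_succ orbT.
- have col_ij : mates_column (row_role (g i) j) by rewrite role_ij.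
  have [p_neq + p_inv] := partner_rowP col_i col_ij.
  case role_p: (row_role (g i) (partner_row (g i) j)) => // _.
  rewrite !inE /= role_p /= xpair_eqE eqxx -val_eqE /= p_neq; split=> //.
    by apply/eqP; rewrite xpair_eqE eqxx -val_eqE /= p_inv.
  by rewrite /CnC3 /cart_adj /= eqxx cycle_adj3 -val_eqE /= eq_sym p_neq.
Qed.

Lemma code_set_pd n (g : 'I_n -> column_code) : 1 < n ->
  (forall i, column_td (g (cyc_pred i)) (g i) (g (cyc_succ i))
             && column_pm (g i) (g (cyc_succ i))) ->
  paired_dominating (CnC3 n) (code_set g).
Proof.
move=> n_gt1 g_ok; split; last by apply: code_set_pm => // i; case/andP: (g_ok i).
by move=> v _; apply: code_set_td v => i; case/andP: (g_ok i).
Qed.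

Definition cycle_hom n (h : 'I_n -> nat) (N : nat) (E : rel nat) :=
  (forall i, h i < N) /\ (forall i, E (h i) (h (cyc_succ i))).

Definition all_walks2 (N : nat) (E : rel nat) (ok : nat -> nat -> nat -> bool) : bool :=
  all (fun a => all (fun b => all (fun c => ~~ (E a b && E b c) || ok a b c)
    (iota 0 N)) (iota 0 N)) (iota 0 N).

Lemma cycle_hom_walks2 n (h : 'I_n -> nat) N E ok : cycle_hom h N E -> all_walks2 N E ok ->
  forall i, ok (h (cyc_pred i)) (h i) (h (cyc_succ i)).
Proof.
move=> [h_lt h_E] /allP walks i.
have h_iota k : h k \in iota 0 N by rewrite mem_iota add0n h_lt.
have E_pred := h_E (cyc_pred i); rewrite cyc_predK in E_pred.
move/allP: (walks _ (h_iota (cyc_pred i))) => /(_ _ (h_iota i)) /allP /(_ _ (h_iota (cyc_succ i))).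
by rewrite E_pred h_E.
Qed.

Definition pattern_col (s : seq column_code) (k : nat) : column_code :=
  nth (Out, Out, Out) s k.

Definition pattern_td (s : seq column_code) (a b c : nat) : bool :=
  column_td (pattern_col s a) (pattern_col s b) (pattern_col s c).

Definition pattern_pd (s : seq column_code) (a b c : nat) : bool :=
  pattern_td s a b c && column_pm (pattern_col s b) (pattern_col s c).

Lemma pattern_total_dominating n (h : 'I_n -> nat) N E s :
  cycle_hom h N E -> all_walks2 N E (pattern_td s) ->
  total_dominating (CnC3 n) (code_set (fun i => pattern_col s (h i))).
Proof. by move=> hom walks; apply: code_set_td; apply: cycle_hom_walks2 hom walks. Qed.

Lemma pattern_paired_dominating n (h : 'I_n -> nat) N E s : 1 < n ->
  cycle_hom h N E -> all_walks2 N E (pattern_pd s) ->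
  paired_dominating (CnC3 n) (code_set (fun i => pattern_col s (h i))).
Proof. by move=> n_gt1 hom walks; apply: code_set_pd => //; apply: cycle_hom_walks2 hom walks. Qed.

Definition cycle_graph (n : nat) : rel nat := fun a b => b == a.+1 %% n.

Lemma cycle_hom_val n : cycle_hom (fun i : 'I_n => val i) n (cycle_graph n).
Proof. by split=> i; [exact: ltn_ord | rewrite /cycle_graph /= eqxx]. Qed.

Definition block_type (q i : nat) : nat := if i < 5 * q then i %% 5 else 5 + (i - 5 * q).

Definition block_graph (L : nat) : rel nat := fun a b =>
  [|| (a < 4) && (b == a.+1), (a == 4) && ((b == 0) || (b == 5)),
      (4 < a < 4 + L) && (b == a.+1) | (a == 4 + L) && (b == 0)].

Lemma cycle_hom_block q L : 0 < q -> 0 < L ->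
  cycle_hom (fun i : 'I_(5 * q + L) => block_type q i) (5 + L) (block_graph L).
Proof.
move=> q_gt0 L_gt0; split=> i; have := ltn_ord i; rewrite /= /block_type.
  by case: ifP; lia.
case: (ltnP i.+1 (5 * q + L)) => [i1_lt _ | i1_ge i_lt].
  by rewrite (modn_small i1_lt); case: ifP; case: ifP; rewrite /block_graph; lia.
have -> : i.+1 = 5 * q + L by lia.
by rewrite modnn; case: ifP; case: ifP; rewrite /block_graph; lia.
Qed.

Lemma sum_modn p q (w : nat -> nat) :
  \sum_(0 <= i < p * q) w (i %% p) = q * \sum_(k < p) w k.
Proof.
elim: q => [|q IH]; first by rewrite muln0 big_geq.
rewrite mulnSr (big_cat_nat (leq0n _) (leq_addr p _)) /= IH.
rewrite -{1}[p * q]add0n big_addn addKn (@eq_big_nat _ _ _ 0 p _ w) ?big_mkord.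
  by rewrite mulSn addnC.
by move=> i /andP [_ i_lt]; rewrite addnC mulnC modnMDl modn_small.
Qed.

Lemma sum_block_type q L (w : nat -> nat) :
  \sum_(i < 5 * q + L) w (block_type q i) = q * \sum_(k < 5) w k + \sum_(t < L) w (5 + t).
Proof.
rewrite -(big_mkord xpredT (fun i => w (block_type q i))).
rewrite (big_cat_nat (leq0n (5 * q)) (leq_addr L _)) /=.
rewrite (@eq_big_nat _ _ _ 0 (5 * q) _ (fun i => w (i %% 5))); last first.
  by move=> i /andP [_ i_lt]; rewrite /block_type i_lt.
rewrite sum_modn -{1}[5 * q]add0n big_addn addKn -(big_mkord xpredT (fun t => w (5 + t))).
congr addn; apply: eq_big_nat => i _; rewrite /block_type; congr w.
by rewrite ltnNge leq_addl /= addnK addnC.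
Qed.

Lemma pattern_td_witness n (h : 'I_n -> nat) N E s k :
  cycle_hom h N E -> all_walks2 N E (pattern_td s) ->
  \sum_(i < n) code_weight (pattern_col s (h i)) = k ->
  exists2 D, total_dominating (CnC3 n) D & #|D| = k.
Proof.
move=> hom walks card_k; exists (code_set (fun i => pattern_col s (h i))).
  exact: pattern_total_dominating hom walks.
by rewrite card_code_set.
Qed.

Lemma pattern_pd_witness n (h : 'I_n -> nat) N E s k : 1 < n ->
  cycle_hom h N E -> all_walks2 N E (pattern_pd s) ->
  \sum_(i < n) code_weight (pattern_col s (h i)) = k ->
  exists2 D, paired_dominating (CnC3 n) D & #|D| = k.
Proof.
move=> n_gt1 hom walks card_k; exists (code_set (fun i => pattern_col s (h i))).
  exact: pattern_paired_dominating hom walks.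
by rewrite card_code_set.
Qed.

Definition block5 : seq column_code :=
  [:: (Vert, Vert, Out); (Out, Out, Out); (Out, Out, Next); (Out, Out, Prev); (Out, Out, Out)].

Definition td_tail (r : nat) : seq column_code :=
  match r with
  | 0 => block5
  | 1 => [:: (Vert, Vert, Out); (Out, Out, Out); (Out, Out, Vert); (Out, Out, Vert);
            (Out, Out, Vert); (Out, Out, Out)]
  | 2 => [:: (Vert, Vert, Out); (Out, Out, Out); (Out, Out, Vert); (Out, Out, Vert);
            (Out, Out, Vert); (Out, Out, Vert); (Out, Out, Out)]
  | 3 => [:: (Vert, Vert, Out); (Out, Out, Out); (Out, Out, Vert); (Out, Out, Vert);
            (Out, Out, Vert); (Out, Out, Vert); (Out, Out, Vert); (Out, Out, Out)]
  | _ => block5 ++ [:: (Vert, Vert, Out); (Out, Out, Out); (Out, Out, Vert); (Out, Out, Vert)]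
  end.

Definition pd_tail (r : nat) : seq column_code :=
  match r with
  | 0 => block5
  | 1 => block5 ++ [:: (Vert, Vert, Out)]
  | 2 => [:: (Vert, Vert, Out); (Out, Out, Out); (Out, Out, Next); (Out, Out, Prev);
            (Out, Out, Next); (Out, Out, Prev); (Out, Out, Out)]
  | 3 => block5 ++ [:: (Vert, Vert, Out); (Out, Out, Out); (Out, Vert, Vert)]
  | _ => block5 ++ [:: (Vert, Vert, Out); (Out, Out, Out); (Out, Out, Next); (Out, Out, Prev)]
  end.

Lemma td_tail_walks r : r < 5 ->
  all_walks2 (5 + (5 + r)) (block_graph (5 + r)) (pattern_td (block5 ++ td_tail r)).
Proof. by case: r => [|[|[|[|[|]]]]] // _; vm_compute. Qed.

Lemma pd_tail_walks r : r < 5 ->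
  all_walks2 (5 + (5 + r)) (block_graph (5 + r)) (pattern_pd (block5 ++ pd_tail r)).
Proof. by case: r => [|[|[|[|[|]]]]] // _; vm_compute. Qed.

Definition td_small (n : nat) : seq column_code :=
  match n with
  | 3 => [:: (Out, Out, Out); (Out, Out, Out); (Vert, Vert, Vert)]
  | 4 => [:: (Out, Out, Out); (Out, Out, Vert); (Out, Out, Vert); (Vert, Vert, Out)]
  | 5 => [:: (Out, Out, Out); (Out, Out, Vert); (Out, Out, Vert); (Out, Out, Out);
            (Vert, Vert, Out)]
  | 6 => [:: (Out, Out, Out); (Out, Out, Vert); (Out, Out, Vert); (Out, Out, Vert);
            (Out, Out, Out); (Vert, Vert, Out)]
  | 7 => [:: (Out, Out, Out); (Out, Out, Vert); (Out, Out, Vert); (Out, Out, Vert);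
            (Out, Out, Vert); (Out, Out, Out); (Vert, Vert, Out)]
  | 8 => [:: (Out, Out, Out); (Out, Out, Vert); (Out, Out, Vert); (Out, Out, Vert);
            (Out, Out, Vert); (Out, Out, Vert); (Out, Out, Out); (Vert, Vert, Out)]
  | _ => block5 ++ [:: (Vert, Vert, Out); (Out, Out, Out); (Out, Out, Vert); (Out, Out, Vert)]
  end.

Definition pd_small (n : nat) : seq column_code :=
  match n with
  | 3 => [:: (Out, Out, Out); (Out, Out, Next); (Vert, Vert, Prev)]
  | 4 => [:: (Out, Out, Out); (Out, Out, Next); (Out, Out, Prev); (Vert, Vert, Out)]
  | 5 => [:: (Out, Out, Out); (Out, Out, Next); (Out, Out, Prev); (Out, Out, Out);
            (Vert, Vert, Out)]
  | 6 => [:: (Out, Out, Out); (Out, Out, Next); (Out, Out, Prev); (Out, Out, Out);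
            (Next, Next, Out); (Prev, Prev, Out)]
  | 7 => [:: (Out, Out, Out); (Out, Out, Next); (Out, Out, Prev); (Out, Out, Next);
            (Out, Out, Prev); (Out, Out, Out); (Vert, Vert, Out)]
  | 8 => [:: (Out, Out, Out); (Out, Out, Next); (Out, Out, Prev); (Out, Out, Out);
            (Vert, Vert, Out); (Out, Out, Out); (Out, Out, Next); (Vert, Vert, Prev)]
  | _ => block5 ++ [:: (Vert, Vert, Out); (Out, Out, Out); (Out, Out, Next); (Out, Out, Prev)]
  end.

Lemma long_cycle_decomp n : 10 <= n ->
  exists q r, [/\ n = 5 * q + (5 + r), r < 5 & 0 < q].
Proof. by move=> n_ge10; exists (n %/ 5 - 1), (n %% 5); split; lia. Qed.

Lemma total_dominating_CnC3_witness n : 3 <= n ->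
  exists2 D, total_dominating (CnC3 n) D & #|D| = ceil_div (4 * n) 5.
Proof.
move=> n_ge3; case: (ltnP n 10) => [n_lt10 | n_ge10].
  apply: (pattern_td_witness (s := td_small n) (cycle_hom_val n));
    move: n_ge3 n_lt10.
  - by case: n => [|[|[|[|[|[|[|[|[|[|m]]]]]]]]]] // _ _; vm_compute.
  - by case: n => [|[|[|[|[|[|[|[|[|[|m]]]]]]]]]] // _ _; rewrite !big_ord_recl big_ord0.
have [q [r [n_eq r_lt5 q_gt0]]] := long_cycle_decomp n_ge10.
subst n; clear n_ge10.
apply: (pattern_td_witness (s := block5 ++ td_tail r) (cycle_hom_block q_gt0 _)) => //.
  exact: td_tail_walks.
rewrite (sum_block_type _ _ (fun k => code_weight (pattern_col _ k))) /ceil_div.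
case: r r_lt5 n_ge3 => [|[|[|[|[|r]]]]] // _ _.
all: by rewrite !big_ord_recl !big_ord0 /code_weight /=; lia.
Qed.

Definition gamma_p_CnC3 (n : nat) : nat :=
  if (n %% 5 == 1) || (n %% 5 == 3) then (ceil_div (4 * n) 5).+1 else ceil_div (4 * n) 5.

Lemma paired_dominating_CnC3_witness n : 3 <= n ->
  exists2 D, paired_dominating (CnC3 n) D & #|D| = gamma_p_CnC3 n.
Proof.
move=> n_ge3; case: (ltnP n 10) => [n_lt10 | n_ge10].
  apply: (pattern_pd_witness (s := pd_small n) (ltnW n_ge3) (cycle_hom_val n));
    move: n_ge3 n_lt10.
  - by case: n => [|[|[|[|[|[|[|[|[|[|m]]]]]]]]]] // _ _; vm_compute.
  - by case: n => [|[|[|[|[|[|[|[|[|[|m]]]]]]]]]] // _ _; rewrite !big_ord_recl big_ord0.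
have [q [r [n_eq r_lt5 q_gt0]]] := long_cycle_decomp n_ge10.
subst n; clear n_ge10.
apply: (pattern_pd_witness (s := block5 ++ pd_tail r) (ltnW n_ge3)
                           (cycle_hom_block q_gt0 _)) => //.
  exact: pd_tail_walks.
rewrite (sum_block_type _ _ (fun k => code_weight (pattern_col _ k))) /gamma_p_CnC3 /ceil_div.
case: r r_lt5 n_ge3 => [|[|[|[|[|r]]]]] // _ _.
all: by rewrite !big_ord_recl !big_ord0 /code_weight /=; case: ifP; lia.
Qed.

Theorem theorem3p1 (n : nat) (hn : 3 <= n) :
  gamma_t_is (CnC3 n) (ceil_div (4 * n) 5)
  /\ gamma_p_is (CnC3 n)
       (if (n %% 5 == 1) || (n %% 5 == 3) then (ceil_div (4 * n) 5).+1
        else ceil_div (4 * n) 5).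
Proof.
split.
  by split; [exact: total_dominating_CnC3_witness | exact: total_dominating_CnC3_card].
split; first exact: paired_dominating_CnC3_witness.
move=> D pdD; have := total_dominating_CnC3_card (paired_dominating_total pdD).
have /negbTE card_even := perfect_matching_card_even pdD.2.
have := odd_double_half #|D|; rewrite card_even add0n -mul2n => <-.
rewrite /ceil_div; case: ifP => [/orP [] /eqP n_mod5 | _]; lia.
Qed.
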